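(* Let $d\ge1$, let $P$ be a probability distribution on $\{0,1\}^d$ with $P(\nu)>0$ for all $\nu$, and fix $\omega\in\{0,1\}^d$. Let $A_\omega$ be the $(2^d-1)\times d$ binary matrix with rows indexed by $\nu\in\{0,1\}^d\setminus\{\omega\}$ and entries $A_\omega(\nu,i)=1$ if $\nu_i\ne\omega_i$ and $0$ otherwise, and let $b_\omega(\nu)=\ln(P(\nu)/P(\omega))$. Then the polyhedron $\{y\in\mathbb{R}^d\mid A_\omega y\le b_\omega\}$ is pointed, i.e. it contains at least one vertex.
   Context: A point $y$ of the polyhedron $\{y: A_\omega y\le b_\omega\}$ is a vertex if there is an invertible $d\times d$ submatrix $A'_\omega$ of $A_\omega$, formed by some $d$ rows, with corresponding subvector $b'_\omega$ of $b_\omega$ (same rows), such that $A'_\omega y=b'_\omega$. *)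

From HB Require Import structures.
From mathcomp Require Import all_boot all_order all_algebra.
From mathcomp Require Import reals exp.
Set Implicit Arguments. Unset Strict Implicit. Unset Printing Implicit Defensive.
Import Order.TTheory GRing.Theory Num.Theory.
Local Open Scope ring_scope.

Definition cube (d : nat) := {ffun 'I_d -> bool}.

Section Defs.
Variables (R : realType) (d : nat).

Definition Aom (w nu : cube d) (i : 'I_d) : R := if nu i != w i then 1 else 0.

Definition bom (P : cube d -> R) (w nu : cube d) : R := ln (P nu / P w).

Definition in_polyhedron (P : cube d -> R) (w : cube d) (y : 'cV[R]_d) : Prop :=
  forall nu : cube d, nu != w -> \sum_(i < d) Aom w nu i * y i 0 <= bom P w nu.

Definition is_vertex (P : cube d -> R) (w : cube d) (y : 'cV[R]_d) : Prop :=
  in_polyhedron P w y /\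
  exists s : 'I_d -> cube d,
    [/\ injective s, (forall k, s k != w),
        (\matrix_(k < d, i < d) Aom w (s k) i) \in unitmx &
        (\matrix_(k < d, i < d) Aom w (s k) i) *m y = \col_(k < d) bom P w (s k)].

End Defs.

From HB Require Import structures.
From mathcomp Require Import all_boot all_order all_algebra.
From mathcomp Require Import reals exp.
Import Order.TTheory GRing.Theory Num.Theory.
Set Implicit Arguments.
Unset Strict Implicit.
Local Open Scope ring_scope.

(* Nothing is needed about P (nor d >= 1): the claim holds for every
   right-hand side b. Sort the rows nu <> omega by the last coordinate k at
   which nu differs from omega. A row of class k has a 1 in column k and 0s
   in all later columns, so choosing y_0, y_1, ... in turn, each y_k as large
   as the rows of class k allow, keeps every earlier class feasible and makes
   one row s_k of class k tight. The tight rows s_0, ..., s_(d-1) form a lower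
   unitriangular, hence invertible, submatrix. *)

Section LastDifference.
Variables (d : nat) (w : cube d).

Definition lastdiff (k : 'I_d) (nu : cube d) : bool :=
  (nu k != w k) && [forall j : 'I_d, (k < j)%N ==> (nu j == w j)].

Lemma lastdiff_neq k nu : lastdiff k nu -> nu != w.
Proof. by case/andP=> nuk _; apply: contraNneq nuk => ->. Qed.

Lemma lastdiff_above {j k : 'I_d} {nu} : lastdiff j nu -> (j < k)%N -> nu k = w k.
Proof. by case/andP=> _ /forall_inP/(_ k) above /above/eqP. Qed.

Lemma lastdiff_inj k j nu : lastdiff k nu -> lastdiff j nu -> k = j.
Proof.
move=> nu_k nu_j; apply: val_inj; case: (ltngtP k j) => // [kj|jk].
- by move: nu_j => /andP[/eqP[]]; rewrite (lastdiff_above nu_k kj).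
- by move: nu_k => /andP[/eqP[]]; rewrite (lastdiff_above nu_j jk).
Qed.

Lemma lastdiff_flip k : lastdiff k [ffun j => if j == k then ~~ w j else w j].
Proof.
apply/andP; split; first by rewrite ffunE eqxx; case: (w k).
apply/forall_inP => j kj; rewrite ffunE.
by have /negbTE -> : j != k by apply: contraTneq kj => ->; rewrite ltnn.
Qed.

Lemma lastdiffP nu : nu != w -> exists k, lastdiff k nu.
Proof.
move=> nu_w; have [i0 nu_i0|agree] := pickP (fun i => nu i != w i); last first.
  by case/eqP: nu_w; apply/ffunP => i; apply/eqP/negbFE/agree.
case: (@arg_maxnP _ i0 (fun i => nu i != w i) val nu_i0) => k nu_k k_max.
exists k; rewrite /lastdiff nu_k; apply/forall_inP => j kj.
by apply: contraTT kj => /k_max; rewrite -leqNgt.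
Qed.

End LastDifference.

Section GreedyVertex.
Variables (R : realType) (d : nat) (w : cube d) (b : cube d -> R).

Definition Aom_mul (y : 'cV[R]_d) (nu : cube d) : R :=
  \sum_(i < d) Aom R w nu i * y i 0.

Lemma Aom_lastdiff k nu : lastdiff w k nu -> Aom R w nu k = 1.
Proof. by case/andP=> nuk _; rewrite /Aom nuk. Qed.

Lemma Aom_lastdiff_above {j k : 'I_d} {nu} :
  lastdiff w j nu -> (j < k)%N -> Aom R w nu k = 0.
Proof. by move=> nu_j jk; rewrite /Aom (lastdiff_above nu_j jk) eqxx. Qed.

Lemma Aom_mul_shift y k (delta : R) nu :
  Aom_mul (y + delta *: delta_mx k 0) nu = Aom_mul y nu + Aom R w nu k * delta.
Proof.
rewrite /Aom_mul (bigD1 k) // [in RHS](bigD1 k) //= !mxE eqxx mulr1 mulrDr.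
rewrite -addrA -[in RHS]addrA; congr (_ + _); rewrite addrC; congr (_ + _).
by apply: eq_bigr => i /negbTE ik; rewrite !mxE ik mulr0 addr0.
Qed.

Definition greedy_inv (n : nat) (y : 'cV[R]_d) (s : 'I_d -> cube d) : Prop :=
  forall k : 'I_d, (k < n)%N ->
    [/\ lastdiff w k (s k), Aom_mul y (s k) = b (s k) &
        forall nu, lastdiff w k nu -> Aom_mul y nu <= b nu].

Lemma greedy_step n y s (lt_nd : (n < d)%N) :
  greedy_inv n y s -> exists y' s', greedy_inv n.+1 y' s'.
Proof.
move=> inv; pose k : 'I_d := Ordinal lt_nd.
pose slack nu := b nu - Aom_mul y nu.
case: (@arg_minP _ R _ _ (lastdiff w k) slack (lastdiff_flip w k))
  => nus nus_k nus_min.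
pose y' := y + slack nus *: delta_mx k 0.
exists y', (fun j => if j == k then nus else s j) => j.
rewrite ltnS leq_eqVlt => /orP[/eqP jn|jn].
  have -> : j = k by apply: val_inj.
  rewrite eqxx.
  have y'E nu : lastdiff w k nu -> Aom_mul y' nu = Aom_mul y nu + slack nus.
    by move=> nu_k; rewrite Aom_mul_shift Aom_lastdiff // mul1r.
  split=> [//||nu nu_k]; first by rewrite y'E // /slack addrC subrK.
  by rewrite y'E // addrC -lerBrDr; apply: nus_min.
have jk : j != k by apply: contraTneq jn => ->; rewrite ltnn.
have y'E nu : lastdiff w j nu -> Aom_mul y' nu = Aom_mul y nu.
  move=> nu_j; rewrite Aom_mul_shift.
  by rewrite (Aom_lastdiff_above (k := k) nu_j jn) mul0r addr0.
have [s_j tight feas] := inv j jn; rewrite (negbTE jk).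
by split=> [//||nu nu_j]; rewrite y'E //; apply: feas.
Qed.

Lemma greedy_complete : exists y s, greedy_inv d y s.
Proof.
suff: forall n, (n <= d)%N -> exists y s, greedy_inv n y s by apply.
elim=> [_|n IHn lt_nd]; first by exists 0, (fun=> w).
by have [y [s /(greedy_step lt_nd)]] := IHn (ltnW lt_nd).
Qed.

Lemma lastdiff_rows_unitmx (s : 'I_d -> cube d) :
  (forall k, lastdiff w k (s k)) ->
  (\matrix_(k < d, i < d) Aom R w (s k) i) \in unitmx.
Proof.
move=> s_k; rewrite unitmxE det_trig.
  by rewrite big1 ?unitr1 // => i _; rewrite mxE Aom_lastdiff.
by apply/is_trig_mxP => k i ki; rewrite mxE (Aom_lastdiff_above (s_k k)).
Qed.

End GreedyVertex.

Theorem lemma4 (R : realType) (d : nat) (hd : (0 < d)%N)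
  (P : cube d -> R) (Ppos : forall nu, 0 < P nu) (Psum : \sum_(nu : cube d) P nu = 1)
  (w : cube d) :
  exists y : 'cV[R]_d, is_vertex P w y.
Proof.
have [y [s inv]] := greedy_complete w (bom P w).
have {}inv k := inv k (ltn_ord k).
have s_k k : lastdiff w k (s k) by case: (inv k).
exists y; split.
  by move=> nu /lastdiffP[k nu_k]; have [_ _ ->] := inv k.
exists s; split.
- by move=> k j sks; apply: (lastdiff_inj (s_k k)); rewrite sks.
- by move=> k; apply: lastdiff_neq (s_k k).
- exact: lastdiff_rows_unitmx.
- apply/matrixP => k i; rewrite ord1 !mxE; have [_ <- _] := inv k.
  by rewrite /Aom_mul; apply: eq_bigr => j _; rewrite mxE.
Qed.
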